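(* Let $\Sigma$ be an alphabet and $A$ a nontrivial finite abelian group. There is no subgroup $G\le\llbracket\Sigma^{\mathbb{Z}}\rrbracket$ isomorphic to $\mathbb{Z}^2$ whose action is move-$A$ithful.
   Context: An alphabet is a finite set with at least two elements. $\llbracket\Sigma^{\mathbb{Z}}\rrbracket$ is the group of homeomorphisms $f$ of $\Sigma^{\mathbb{Z}}$ with a continuous cocycle $c_f:\Sigma^{\mathbb{Z}}\to\mathbb{Z}$ such that $f(x)=\sigma^{c_f(x)}(x)$, where $\sigma(x)_i=x_{i+1}$; for $g\in G$ write $c_g$ for its cocycle. For a finite abelian group $A$, the action of $G\le\llbracket\Sigma^{\mathbb{Z}}\rrbracket$ is move-$A$ithful if for every map $\beta:G\to A$ with finite nonempty support there exist $x\in\Sigma^{\mathbb{Z}}$ and $\gamma:\mathbb{Z}\to\mathrm{End}(A)$ with $\sum_{g\in G}\gamma(c_g(x))(\beta(g))\neq0_A$. *)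

From HB Require Import structures.
From mathcomp Require Import all_boot all_order all_algebra.
Set Implicit Arguments. Unset Strict Implicit. Unset Printing Implicit Defensive.
Import Order.TTheory GRing.Theory Num.Theory.
Local Open Scope ring_scope.

Definition config (S : finType) := int -> S.

Definition shiftZ (S : finType) (k : int) (x : config S) : config S :=
  fun i => x (i + k).

Definition agree (S : finType) (n : nat) (x y : config S) : Prop :=
  forall i : int, (`|i| <= n)%N -> x i = y i.

(* Continuity for the product topology of discrete Sigma (Cantor topology). *)
Definition cont_map (S : finType) (f : config S -> config S) : Prop :=
  forall (x : config S) (m : nat), exists n : nat,
    forall y, agree n x y -> agree m (f x) (f y).

(* Continuity of a Z-valued map (Z discrete) = local constancy. *)
Definition cont_int (S : finType) (c : config S -> int) : Prop :=
  forall x : config S, exists n : nat, forall y, agree n x y -> c y = c x.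

Definition homeo (S : finType) (f : config S -> config S) : Prop :=
  exists g : config S -> config S,
    cancel f g /\ cancel g f /\ cont_map f /\ cont_map g.

Definition cocycle_of (S : finType) (f : config S -> config S)
  (c : config S -> int) : Prop :=
  cont_int c /\ forall x, f x = shiftZ (c x) x.

Definition in_TFG (S : finType) (f : config S -> config S) : Prop :=
  homeo f /\ exists c, cocycle_of f c.

(* phi : Z^2 -> [[Sigma^Z]] is an injective group homomorphism, i.e. its
   image G is a subgroup of [[Sigma^Z]] isomorphic to Z^2 (via phi). *)
Definition Z2_embedding (S : finType) (phi : int * int -> (config S -> config S)) : Prop :=
  (forall p, in_TFG (phi p)) /\
  (forall p q : int * int, phi (p.1 + q.1, p.2 + q.2) = phi p \o phi q) /\
  injective phi.

(* Move-A-ithfulness of the action of G = image phi, where c p is the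
   cocycle of phi p and a map beta : G -> A is transported to Z^2 via phi.
   The sum over g in G of a finitely supported family is computed over any
   duplicate-free list s containing the support (terms outside the support
   vanish since gamma(k) is additive). *)
Definition move_faithful (S : finType) (A : finZmodType)
  (c : int * int -> config S -> int) : Prop :=
  forall (beta : int * int -> A) (s : seq (int * int)),
    uniq s -> (forall p, beta p != 0 -> p \in s) -> (exists p, beta p != 0) ->
    exists (x : config S) (gamma : int -> {additive A -> A}),
      \sum_(p <- s) gamma (c p x) (beta p) != 0.

From HB Require Import structures.
From mathcomp Require Import all_boot all_order all_algebra.
From mathcomp Require Import zify.
From Stdlib Require Import Classical IndefiniteDescription FunctionalExtensionality.
Set Implicit Arguments. Unset Strict Implicit. Unset Printing Implicit Defensive.
Import Order.TTheory GRing.Theory Num.Theory.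
Local Open Scope ring_scope.

(* Let phi embed Z^2 into [[Sigma^Z]] with cocycles c p, and fix a <> 0 in A.
   Let beta be a.delta_0 acted on by the difference operators 1 - T_w for all
   lexicographically positive w in a box [-n, n]^2: beta is finitely supported
   and beta 0 = a.  Given any x, pad x far away into an aperiodic point y; this
   does not change the finitely many relevant cocycle values.  The map
   f p := c p y satisfies f p = f q iff phi p y = phi q y, so translations of
   Z^2 permute the fibres of f.  Continuous cocycles are bounded (compactness),
   hence f is Lipschitz, and a pigeonhole argument gives a period d of f in the
   box.  The factor 1 - T_d (or 1 - T_-d) of beta makes beta sum to zero on
   every fibre of f, so sum_p gamma (c p x) (beta p) = 0 for every family gamma
   of additive maps, contradicting move-A-ithfulness. *)

Lemma common_bound (T : eqType) (P : T -> nat -> Prop) (l : seq T) :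
  (forall x m m', (m <= m')%N -> P x m -> P x m') ->
  (forall x, x \in l -> exists m, P x m) -> exists m, forall x, x \in l -> P x m.
Proof.
move=> mono; elim: l => [|a l IH] H; first by exists 0%N.
have [m1 Hm1] := H a (mem_head _ _).
have [m2 Hm2] : exists m, forall x, x \in l -> P x m.
  by apply: IH => x xl; apply: H; rewrite inE xl orbT.
exists (maxn m1 m2) => x; rewrite inE => /orP [/eqP -> | xl].
  by apply: mono Hm1; rewrite leq_maxl.
by apply: mono (Hm2 x xl); rewrite leq_maxr.
Qed.

Section Continuity.
Variable S : finType.

Definition cyl (n : nat) (z y : config S) := forall i : int, (absz i < n)%N -> z i = y i.

Definition bounded_on_cyl (g : config S -> int) (n : nat) (z : config S) :=
  exists M : nat, forall y, cyl n z y -> (absz (g y) <= M)%N.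

(* A cylinder is the finite union of the cylinders of radius n + 1 it contains,
   so a map unbounded on it is unbounded on one of them. *)
Lemma unbounded_subcyl (g : config S -> int) n z :
  ~ bounded_on_cyl g n z -> exists z', cyl n z z' /\ ~ bounded_on_cyl g n.+1 z'.
Proof.
move=> unb; apply: NNPP => H; apply: unb.
pose zab (ab : S * S) : config S := fun i =>
  if i == - (n%:Z) then ab.1 else if i == n%:Z then ab.2 else z i.
have [M HM] : exists M, forall ab, ab \in enum {: S * S} ->
    forall y, cyl n.+1 (zab ab) y -> (absz (g y) <= M)%N.
  apply: common_bound.
    by move=> ab m m' le Hm y Hy; apply: leq_trans (Hm y Hy) le.
  move=> ab _; apply: NNPP => nb; apply: H; exists (zab ab); split.
    move=> i Hi; rewrite /zab.
    have -> : (i == - n%:Z) = false by apply/eqP => e; move: Hi; rewrite e; lia.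
    by have -> : (i == n%:Z) = false by apply/eqP => e; move: Hi; rewrite e; lia.
  by case=> M HM; apply: nb; exists M.
exists M => y Hy; apply: (HM (y (- n%:Z), y n%:Z)); first by rewrite mem_enum.
move=> i Hi; rewrite /zab /=.
case: eqP => [-> //|ne1]; case: eqP => [-> //|ne2].
apply: Hy; lia.
Qed.

Lemma nested_cyl_point (zs : nat -> config S) :
  (forall k, cyl k (zs k) (zs k.+1)) -> exists x, forall k, cyl k (zs k) x.
Proof.
move=> nest.
have grow : forall m d, cyl m (zs m) (zs (m + d)%N).
  move=> m; elim=> [|d IH]; first by rewrite addn0.
  by move=> i Hi; rewrite (IH i Hi) addnS; apply: nest; lia.
exists (fun i => zs (absz i).+1 i) => k i Hi.
by rewrite (grow (absz i).+1 (k - (absz i).+1)%N i) ?subnKC.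
Qed.

(* If not,
   iterating unbounded_subcyl gives nested cylinders on which g is unbounded,
   contradicting continuity at their common point. *)
Lemma cont_int_bounded (g : config S -> int) (s0 : S) :
  cont_int g -> exists M : nat, forall x, (absz (g x) <= M)%N.
Proof.
move=> cg; apply: NNPP => unb.
have unb0 : ~ bounded_on_cyl g 0 (fun _ => s0).
  by case=> M HM; apply: unb; exists M => x; apply: HM => i; rewrite ltn0.
have step : forall zn : config S * nat, exists z', ~ bounded_on_cyl g zn.2 zn.1 ->
    cyl zn.2 zn.1 z' /\ ~ bounded_on_cyl g zn.2.+1 z'.
  move=> [z n] /=; case: (classic (bounded_on_cyl g n z)) => [b|nb]; first by exists z.
  by have [z' Hz'] := unbounded_subcyl nb; exists z'.
have [next Hnext] := functional_choice _ step.
pose zs := fix zs k := if k is k'.+1 then next (zs k', k') else (fun _ => s0).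
have unbk : forall k, ~ bounded_on_cyl g k (zs k).
  by elim=> [|k IH] //=; apply: (Hnext (zs k, k) IH).2.
have [x Hx] : exists x, forall k, cyl k (zs k) x.
  by apply: nested_cyl_point => k; apply: (Hnext (zs k, k) (unbk k)).1.
have [N HN] := cg x.
apply: (unbk N.+1); exists (absz (g x)) => y Hy.
by rewrite (HN y) // => i Hi; rewrite -(Hx N.+1 i) ?ltnS //; apply: Hy; lia.
Qed.

Lemma cont_int_common_window (I : eqType) (g : I -> config S -> int) (l : seq I) x :
  (forall i, cont_int (g i)) ->
  exists W : nat, forall i, i \in l -> forall z, agree W x z -> g i z = g i x.
Proof.
move=> cg; apply: common_bound => [i m m' le H z Hz|i _].
  by apply: H => j Hj; apply: Hz; apply: leq_trans le.
by have [n Hn] := cg i x; exists n.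
Qed.

End Continuity.

Section AperiodicPadding.
Variable S : finType.

Lemma shiftZ_shiftZ (k l : int) (z : config S) : shiftZ k (shiftZ l z) = shiftZ (l + k) z.
Proof. by apply: functional_extensionality => i; rewrite /shiftZ addrA addrAC. Qed.

Definition pad (x : config S) (W : nat) (a b : S) : config S :=
  fun i => if (absz i <= W)%N then x i else if 0 < i then a else b.

Lemma agree_pad x W a b : agree W x (pad x W a b).
Proof. by move=> i Hi; rewrite /pad Hi. Qed.

(* For a <> b the padded point has no nonzero period: far to the right it
   reads a, far to the left b. *)
Lemma pad_no_period x W a b (m : int) : a != b -> m != 0 ->
  ~ (forall j, pad x W a b (j + m) = pad x W a b j).
Proof.
set y := pad x W a b => ab; wlog m_gt0 : m / 0 < m => [wlog m0 per|_ per].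
  case: (ltrgtP 0 m) => [m_gt0|m_lt0|m_eq0]; first exact: wlog per.
  - apply: (wlog (- m)); rewrite ?oppr_gt0 ?oppr_eq0 // => j.
    by rewrite -[in RHS](subrK m j) per.
  - by move: m0; rewrite -m_eq0 eqxx.
have iter_per : forall (t : nat) j, y (j + m * t%:Z) = y j.
  elim=> [|t IH] j; first by rewrite mulr0 addr0.
  by rewrite -addn1 PoszD mulrDr mulr1 addrA per IH.
have := iter_per (2 * W + 2)%N (- (W%:Z + 1)); rewrite /y /pad.
have -> : (absz (- (W%:Z + 1) + m * (2 * W + 2)%N%:Z)%R <= W)%N = false by nia.
have -> : (0 < - (W%:Z + 1) + m * (2 * W + 2)%N%:Z) = true by nia.
have -> : (absz (- (W%:Z + 1))%R <= W)%N = false by lia.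
have -> : (0 < - (W%:Z + 1)) = false by lia.
by move=> e; move: ab; rewrite e eqxx.
Qed.

Lemma pad_aperiodic x W a b : a != b ->
  forall k l, shiftZ k (pad x W a b) = shiftZ l (pad x W a b) -> k = l.
Proof.
move=> ab k l E; apply: NNPP => kl.
apply: (pad_no_period (x := x) (W := W) (m := k - l) ab).
  by rewrite subr_eq0; apply/eqP.
move=> j; move: (congr1 (fun z => z (j - l)) E).
by rewrite /shiftZ subrK addrAC -addrA.
Qed.

End AperiodicPadding.

Section FibreSums.
Variables G A : zmodType.

Definition supported_on (g : G -> A) (s : seq G) :=
  uniq s /\ forall p, g p != 0 -> p \in s.

Lemma sum_supported_on (g : G -> A) s1 s2 (P : pred G) :
  supported_on g s1 -> supported_on g s2 ->
  \sum_(p <- s1 | P p) g p = \sum_(p <- s2 | P p) g p.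
Proof.
have red s : \sum_(p <- s | P p) g p = \sum_(p <- [seq p <- s | P p && (g p != 0)]) g p.
  rewrite big_filter (bigID (fun p => g p != 0)) /=.
  by rewrite [X in _ + X]big1 ?addr0 // => p /andP [_ /negPn/eqP].
move=> [u1 h1] [u2 h2]; rewrite !red; apply: perm_big; apply: uniq_perm.
- exact: filter_uniq.
- exact: filter_uniq.
move=> p; rewrite !mem_filter; case: (P p) => //=; case nz: (g p != 0) => //=.
by rewrite h1 ?h2 ?nz.
Qed.

Lemma supported_on_sub (g : G -> A) t u :
  supported_on g t -> uniq u -> {subset t <= u} -> supported_on g u.
Proof. by move=> [_ ht] uu tu; split=> // p /ht /tu. Qed.

Lemma supported_on_translate (g : G -> A) t w :
  supported_on g t -> supported_on (fun p => g (p - w)) [seq q + w | q <- t].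
Proof.
move=> [ut ht]; split; first by rewrite map_inj_uniq // => p q /addIr.
by move=> p /ht hp; apply/mapP; exists (p - w); rewrite ?subrK.
Qed.

Definition diff (w : G) (g : G -> A) : G -> A := fun p => g p - g (p - w).

Lemma supported_on_diff (g : G -> A) t w :
  supported_on g t -> supported_on (diff w g) (undup (t ++ [seq q + w | q <- t])).
Proof.
move=> ht; split=> [|p]; first exact: undup_uniq.
rewrite /diff mem_undup mem_cat; case: (g p =P 0) => [->|/eqP /ht.2 -> //].
by rewrite sub0r oppr_eq0 => /(supported_on_translate w ht).2 ->; rewrite orbT.
Qed.

Lemma sum_diff (g : G -> A) t s w (P : pred G) :
  supported_on g t -> supported_on (diff w g) s ->
  \sum_(p <- s | P p) diff w g p =
  \sum_(p <- t | P p) g p - \sum_(q <- t | P (q + w)) g q.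
Proof.
move=> ht hs; have htw := supported_on_translate w ht.
rewrite (sum_supported_on P hs (supported_on_diff w ht)) sumrB.
rewrite (sum_supported_on P (supported_on_sub ht (undup_uniq _) _) ht); last first.
  by move=> p pt; rewrite mem_undup mem_cat pt.
rewrite (sum_supported_on P (supported_on_sub htw (undup_uniq _) _) htw); last first.
  by move=> p pt; rewrite mem_undup mem_cat pt orbT.
by rewrite big_map; congr (_ - _); apply: eq_bigr => q _; rewrite addrK.
Qed.

Variables (K : eqType) (f : G -> K).

Definition fibre_null (g : G -> A) :=
  forall s, supported_on g s -> forall p0, \sum_(p <- s | f p == f p0) g p = 0.

Definition fibres_invariant := forall w p q, (f (p + w) == f (q + w)) = (f p == f q).

Lemma fibre_null_diff_period (g : G -> A) t w :
  supported_on g t -> (forall p, f (p + w) = f p) -> fibre_null (diff w g).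
Proof.
move=> ht per s hs p0; rewrite (sum_diff _ ht hs).
by rewrite [X in _ - X](eq_bigl (fun q => f q == f p0)) ?subrr // => q; rewrite per.
Qed.

Lemma fibre_null_diff (g : G -> A) t w :
  supported_on g t -> (forall p q, (f (p + w) == f (q + w)) = (f p == f q)) ->
  fibre_null g -> fibre_null (diff w g).
Proof.
move=> ht inv gnull s hs p0; rewrite (sum_diff _ ht hs).
rewrite [X in _ - X](eq_bigl (fun q => f q == f (p0 - w))); last first.
  by move=> q; rewrite -{1}(subrK w p0) inv.
by rewrite !gnull // subrr.
Qed.

Lemma coincidence_period (d p : G) :
  fibres_invariant -> f (p + d) = f p -> forall r, f (r + d) = f r.
Proof.
move=> inv E r; apply/eqP.
have := inv (r - p) (p + d) p; rewrite E eqxx [p + d + _]addrAC [p + _]addrC.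
by rewrite subrK.
Qed.

Lemma fibre_null_sum (B : zmodType) (gamma : K -> {additive A -> B}) (g : G -> A) t :
  supported_on g t -> fibre_null g -> \sum_(p <- t) gamma (f p) (g p) = 0.
Proof.
move=> ht gnull; set u := undup [seq f p | p <- t].
transitivity (\sum_(p <- t) \sum_(k <- u) (if f p == k then gamma k (g p) else 0)).
  apply: eq_big_seq => p pt.
  rewrite (bigD1_seq (f p)) ?undup_uniq ?mem_undup ?map_f //= eqxx big1 ?addr0 //.
  by move=> k; rewrite eq_sym => /negPf ->.
rewrite exchange_big big1_seq // => k /andP [_]; rewrite mem_undup => /mapP [p0 _ ->].
by rewrite -big_mkcond -raddf_sum gnull ?raddf0.
Qed.

End FibreSums.

Lemma addpE (p q : int * int) : p + q = (p.1 + q.1, p.2 + q.2). Proof. by []. Qed.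
Lemma opppE (p : int * int) : - p = (- p.1, - p.2). Proof. by []. Qed.
Lemma zeropE : (0 : int * int) = (0, 0). Proof. by []. Qed.

Section Witness.
Variable A : zmodType.

Definition lexpos (p : int * int) := (0 < p.1) || ((p.1 == 0) && (0 < p.2)).
Definition lexneg (p : int * int) := (p.1 < 0) || ((p.1 == 0) && (p.2 < 0)).

Definition delta (a : A) : int * int -> A := fun p => if p == 0 then a else 0.

Definition beta_of (a : A) (ws : seq (int * int)) : int * int -> A :=
  foldr (fun w g => diff w g) (delta a) ws.

Lemma beta_of_supported a ws : exists t, supported_on (beta_of a ws) t.
Proof.
elim: ws => [|w ws [t ht]] /=.
  by exists [:: 0]; split=> // p; rewrite /delta mem_seq1; case: (p == 0); rewrite ?eqxx.
by exists (undup (t ++ [seq q + w | q <- t])); apply: supported_on_diff.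
Qed.

Lemma beta_of_lexneg a ws : all lexpos ws -> forall p, lexneg p -> beta_of a ws p = 0.
Proof.
elim: ws => [|w ws IH] /=.
  by move=> _ p; rewrite /delta; case: (p =P 0) => // ->; rewrite /lexneg zeropE /= ltxx.
move=> /andP [hw /IH hneg] p hp; rewrite /diff !hneg ?subrr //.
by move: hp hw; rewrite /lexneg /lexpos addpE opppE /=; lia.
Qed.

Lemma beta_of_origin a ws : all lexpos ws -> beta_of a ws 0 = a.
Proof.
elim: ws => [|w ws IH] /=; first by rewrite /delta eqxx.
move=> /andP [hw hws]; rewrite /diff IH // (beta_of_lexneg a hws) ?subr0 //.
by move: hw; rewrite /lexneg /lexpos sub0r opppE /=; lia.
Qed.

Lemma beta_of_fibre_null (K : eqType) (f : int * int -> K) a ws d :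
  fibres_invariant f -> (forall p, f (p + d) = f p) ->
  (d \in ws) || (- d \in ws) -> fibre_null f (beta_of a ws).
Proof.
move=> inv per; elim: ws => [|w ws IH] //=.
have [t ht] := beta_of_supported a ws.
case: (w =P d) => [->|nd]; first by move=> _; apply: fibre_null_diff_period ht per.
case: (w =P - d) => [->|nd'].
  by move=> _; apply: fibre_null_diff_period ht _ => p; rewrite -{2}(subrK d p) per.
rewrite !inE; have -> : (d == w) = false by apply/eqP => e; apply: nd.
have -> : (- d == w) = false by apply/eqP => e; apply: nd'.
by move/IH; apply: fibre_null_diff ht (inv w).
Qed.

Definition int_range (n : nat) : seq int := [seq k%:Z - n%:Z | k <- iota 0 (n + n).+1].

Lemma mem_int_range n (i : int) : (absz i <= n)%N -> i \in int_range n.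
Proof.
move=> hi; apply/mapP; exists (absz (i + n%:Z)); last by lia.
by rewrite mem_iota; lia.
Qed.

Definition lexpos_box (n : nat) : seq (int * int) :=
  [seq p <- [seq (i, j) | i <- int_range n, j <- int_range n] | lexpos p].

Lemma lexpos_box_lexpos n : all lexpos (lexpos_box n).
Proof. exact: filter_all. Qed.

Lemma lexpos_box_mem n (d : int * int) : d != 0 ->
  (absz d.1 <= n)%N -> (absz d.2 <= n)%N -> (d \in lexpos_box n) || (- d \in lexpos_box n).
Proof.
case: d => d1 d2 nz /= h1 h2; rewrite !mem_filter opppE /=.
have inbox (u v : int) : (absz u <= n)%N -> (absz v <= n)%N ->
    (u, v) \in [seq (i, j) | i <- int_range n, j <- int_range n].
  by move=> hu hv; apply/allpairsP; exists (u, v); rewrite !mem_int_range.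
rewrite !inbox //=; try lia.
have : (d1 != 0) || (d2 != 0).
  by move: nz; rewrite -negb_and; apply: contra => /andP [/eqP -> /eqP ->].
by rewrite !andbT /lexpos /=; lia.
Qed.

End Witness.

Lemma walk_growth (h : nat -> int) (R : nat) :
  (forall k, (absz (h k.+1 - h k)%R <= R)%N) -> forall k, (absz (h k - h 0%N)%R <= k * R)%N.
Proof.
move=> step; elim=> [|k IH]; first by rewrite subrr.
by have := step k; rewrite mulSn; lia.
Qed.

Lemma grid_collision (n B : nat) (h : 'I_n.+1 -> 'I_n.+1 -> int) :
  (forall i j, (absz (h i j) <= B)%N) -> ((2 * B).+1 < n.+1 * n.+1)%N ->
  exists i1 j1 i2 j2, (i1, j1) != (i2, j2) /\ h i1 j1 = h i2 j2.
Proof.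
move=> hB card.
pose code (ij : 'I_n.+1 * 'I_n.+1) : 'I_(2 * B).+1 := inord (absz (h ij.1 ij.2 + B%:Z)).
have /injectivePn [[i1 j1] [[i2 j2] ne E]] : ~~ injectiveb code.
  by apply/negP => /injectiveP /leq_card; rewrite card_prod !card_ord; lia.
exists i1, j1, i2, j2; split=> //.
have b1 := hB i1 j1; have b2 := hB i2 j2.
by move/(congr1 val): E; rewrite /code /= !inordK; lia.
Qed.

Lemma lipschitz_coincidence (f : int * int -> int) (R : nat) :
  (forall p, (absz (f (p + (1, 0)) - f p)%R <= R)%N) ->
  (forall p, (absz (f (p + (0, 1)) - f p)%R <= R)%N) ->
  exists p d, [/\ d != 0, (absz d.1 <= 4 * R + 1)%N, (absz d.2 <= 4 * R + 1)%N
                & f (p + d) = f p].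
Proof.
move=> h1 h2; set n := (4 * R + 1)%N.
have growth (i j : nat) : (absz (f (i%:Z, j%:Z) - f 0)%R <= (i + j) * R)%N.
  have gi : (absz (f (i%:Z, 0) - f 0)%R <= i * R)%N.
    apply: (walk_growth (h := fun k : nat => f (k%:Z, 0))) => k.
    have -> : (Posz k.+1, 0) = (k%:Z, 0) + (1, 0) :> (int * int).
      by rewrite addpE /=; congr pair; lia.
    exact: h1.
  have gj : (absz (f (i%:Z, j%:Z) - f (i%:Z, 0))%R <= j * R)%N.
    apply: (walk_growth (h := fun k : nat => f (i%:Z, k%:Z))) => k.
    have -> : (i%:Z, Posz k.+1) = (i%:Z, k%:Z) + (0, 1) :> (int * int).
      by rewrite addpE /=; congr pair; lia.
    exact: h2.
  by rewrite mulnDl; lia.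
have bound (i j : 'I_n.+1) :
    (absz (f ((i : nat)%:Z, (j : nat)%:Z) - f 0)%R <= 2 * n * R)%N.
  apply: leq_trans (growth i j) _; rewrite leq_mul2r; apply/orP; right.
  by have := ltn_ord i; have := ltn_ord j; lia.
have few_values : ((2 * (2 * n * R)).+1 < n.+1 * n.+1)%N by rewrite /n; nia.
have [i1 [j1 [i2 [j2 [ne E]]]]] := @grid_collision n (2 * n * R)
  (fun i j => f ((i : nat)%:Z, (j : nat)%:Z) - f 0) bound few_values.
exists ((i1 : nat)%:Z, (j1 : nat)%:Z).
exists ((i2 : nat)%:Z - (i1 : nat)%:Z, (j2 : nat)%:Z - (j1 : nat)%:Z).
have lt_i1 := ltn_ord i1; have lt_i2 := ltn_ord i2.
have lt_j1 := ltn_ord j1; have lt_j2 := ltn_ord j2.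
split=> /=; try lia.
- apply: contra ne => /eqP [/subr0_eq [e1] /subr0_eq [e2]].
  by rewrite xpair_eqE -!val_eqE /= e1 e2 !eqxx.
- by rewrite addpE /= !subrKC; move/addIr/esym: E.
Qed.

Section Orbits.
Variables (S : finType) (phi : int * int -> config S -> config S)
  (c : int * int -> config S -> int).
Hypothesis phi_Z2 : Z2_embedding phi.
Hypothesis c_cocycle : forall p, cocycle_of (phi p) (c p).
Variable y : config S.
Hypothesis y_aperiodic : forall k l, shiftZ k y = shiftZ l y -> k = l.

Definition displacement (p : int * int) : int := c p y.

Lemma phi_add p q : phi (p + q) = phi p \o phi q.
Proof. by case: phi_Z2 => _ [law _]; exact: law. Qed.

Lemma phi_inj p : injective (phi p).
Proof. by case: phi_Z2 => /(_ p) [[g [can _]] _] _; exact: can_inj can. Qed.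

Lemma phiE p z : phi p z = shiftZ (c p z) z.
Proof. exact: (c_cocycle p).2. Qed.

(* As y is aperiodic, the displacement determines the point of the orbit. *)
Lemma displacement_eq p q : displacement p = displacement q <-> phi p y = phi q y.
Proof. by rewrite /displacement !phiE; split=> [-> // | /y_aperiodic]. Qed.

Lemma displacement_fibres : fibres_invariant displacement.
Proof.
move=> w p q; apply/eqP/eqP => /displacement_eq E; apply/displacement_eq;
  move: E; rewrite !(addrC _ w) !phi_add /=; [exact: phi_inj | by move=> ->].
Qed.

Lemma displacement_add p e :
  displacement (p + e) = displacement p + c e (shiftZ (displacement p) y).
Proof.
apply: y_aperiodic; rewrite /displacement -(phiE (p + e)) (addrC p e) phi_add /=.
by rewrite (phiE e) (phiE p) shiftZ_shiftZ.
Qed.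

Lemma displacement_step e (M : nat) : (forall z, (absz (c e z) <= M)%N) ->
  forall p, (absz (displacement (p + e) - displacement p)%R <= M)%N.
Proof. by move=> hM p; rewrite displacement_add addrC addKr; apply: hM. Qed.

(* If the generators displace by at most R, the displacement has a period in
   the box [-(4R + 1), 4R + 1]^2, so the witness built on that box sums to
   zero on each of its fibres. *)
Lemma witness_fibre_null (A : zmodType) (a : A) (R : nat) :
  (forall z, (absz (c (1, 0) z)%R <= R)%N) -> (forall z, (absz (c (0, 1) z)%R <= R)%N) ->
  fibre_null displacement (beta_of a (lexpos_box (4 * R + 1))).
Proof.
move=> h1 h2.
have [p [d [d_nz b1 b2 E]]] :=
  lipschitz_coincidence (displacement_step h1) (displacement_step h2).
apply: (beta_of_fibre_null (a := a) displacement_fibres (coincidence_period displacement_fibres E)).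
exact: lexpos_box_mem.
Qed.

End Orbits.

Theorem mainTheorem15 (S : finType) (A : finZmodType)
  (hS : (1 < #|S|)%N) (hA : (1 < #|A|)%N) :
  ~ exists (phi : int * int -> (config S -> config S))
           (c : int * int -> config S -> int),
      Z2_embedding phi /\ (forall p, cocycle_of (phi p) (c p)) /\
      move_faithful A c.
Proof.
move=> [phi [c [emb [cocyc faithful]]]].
have [s1 [s2 [_ _ s12]]] := card_gt1P hS.
have [a a_nz] : exists a : A, a != 0.
  have [a0 [a1 [_ _ a01]]] := card_gt1P hA.
  by case: (a0 =P 0) => [e|/eqP ?]; [exists a1; rewrite -e eq_sym | exists a0].
have [R1 bound1] := cont_int_bounded s1 (cocyc (1, 0)).1.
have [R2 bound2] := cont_int_bounded s1 (cocyc (0, 1)).1.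
set R := maxn R1 R2; set ws := lexpos_box (4 * R + 1).
have [t ht] := beta_of_supported a ws.
have beta0 : beta_of a ws 0 != 0 by rewrite (beta_of_origin a (lexpos_box_lexpos _)).
have [x [gamma sum_nz]] := faithful _ t ht.1 ht.2 (ex_intro _ 0 beta0).
(* The cocycles indexed by t are constant near x, so padding x outside that
   window yields an aperiodic point without changing any summand. *)
have [W HW] := cont_int_common_window t x (fun p => (cocyc p).1).
have null := witness_fibre_null emb cocyc (pad_aperiodic (x := x) (W := W) s12) (a := a)
  (fun z => leq_trans (bound1 z) (leq_maxl R1 R2))
  (fun z => leq_trans (bound2 z) (leq_maxr R1 R2)).
have same_sum : \sum_(p <- t) gamma (c p x) (beta_of a ws p) =
    \sum_(p <- t) gamma (displacement c (pad x W s1 s2) p) (beta_of a ws p).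
  by apply: eq_big_seq => p pt; rewrite /displacement (HW p pt _ (@agree_pad _ x W s1 s2)).
by move: sum_nz; rewrite same_sum (fibre_null_sum gamma ht null) eqxx.
Qed.
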